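(* Let $A=\mathbb{F}_2(\mathbb{Z}_3)$ with calculus as in the context. Then the element $$g_B=(1+y)\,\omega^1\otimes\omega^1+(1+x+y)(\omega^1\otimes\omega^2+\omega^2\otimes\omega^1)+(1+x)\,\omega^2\otimes\omega^2$$ is the unique invertible, central, quantum symmetric metric. It admits exactly four QLCs; three of them are flat and the fourth has curvature $R_\nabla\eta=\mathrm{Vol}\otimes\eta$ for all $\eta\in\Omega^1$. The quantum dimension $(\ ,\ )(g_B)$ is $0$, and for each of the four QLCs the Laplacian $\Delta$ is identically zero.
   Context: Algebra B: $A$ is the commutative algebra over $\mathbb{F}_2$ with basis $1,x,y$ and $x^2=x$, $y^2=y$, $xy=0$ (the functions on $\mathbb{Z}_3$). $\Omega^1$ is the universal calculus, free as a left module on $\omega^1=\mathrm{d}x$, $\omega^2=\mathrm{d}y$, with $\omega^1x=(1+x)\omega^1$, $\omega^1y=x\omega^2$, $\omega^2x=y\omega^1$, $\omega^2y=(1+y)\omega^2$. $\Omega^2=A\,\mathrm{Vol}$ free of rank one with central basis $\mathrm{Vol}$, $\omega^1\wedge\omega^1=(1+x)\mathrm{Vol}$, $\omega^1\wedge\omega^2=\omega^2\wedge\omega^1=(x+y)\mathrm{Vol}$, $\omega^2\wedge\omega^2=(1+y)\mathrm{Vol}$, $\mathrm{d}\omega^i=0$. Definitions: $g\in\Omega^1\otimes_A\Omega^1$ is central if $ag=ga$ for all $a$; quantum symmetric if $\wedge(g)=0$; an invertible metric if there is a bimodule map $(\ ,\ ):\Omega^1\otimes_A\Omega^1\to A$ with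 $((\eta,\ )\otimes\mathrm{id})g=\eta=(\mathrm{id}\otimes(\ ,\eta))g$ for all $\eta$. A QLC for $g$ is a bimodule connection ($\nabla(a\omega)=a\nabla\omega+\mathrm{d}a\otimes\omega$, $\nabla(\omega a)=(\nabla\omega)a+\sigma(\omega\otimes\mathrm{d}a)$ for a bimodule map $\sigma$) which is torsion free ($\wedge\nabla=\mathrm{d}$ on $\Omega^1$) and metric compatible ($(\nabla\otimes\mathrm{id})g+(\sigma\otimes\mathrm{id})(\mathrm{id}\otimes\nabla)g=0$). Curvature $R_\nabla=(\mathrm{d}\otimes\mathrm{id}-\mathrm{id}\wedge\nabla)\nabla$; flat means $R_\nabla=0$. Laplacian $\Delta=(\ ,\ )\nabla\mathrm{d}:A\to A$; quantum dimension $(\ ,\ )(g)$. *)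

From mathcomp Require Import all_boot.
Set Implicit Arguments.
Unset Strict Implicit.
Unset Printing Implicit Defensive.

(* The algebra A = F_2(Z_3): basis 1, x, y with x^2 = x, y^2 = y, xy = 0.   *)
(* (c0, c1, c2) : Alg  stands for  c0*1 + c1*x + c2*y,  c_i in F_2 = bool.  *)
Definition Alg := (bool * bool * bool)%type.

Definition aadd (a b : Alg) : Alg :=
  let '(a0, a1, a2) := a in let '(b0, b1, b2) := b in
  (xorb a0 b0, xorb a1 b1, xorb a2 b2).

Definition amul (a b : Alg) : Alg :=
  let '(a0, a1, a2) := a in let '(b0, b1, b2) := b in
  (a0 && b0,
   xorb (xorb (a0 && b1) (a1 && b0)) (a1 && b1),
   xorb (xorb (a0 && b2) (a2 && b0)) (a2 && b2)).

Definition azero : Alg := (false, false, false).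
Definition aone  : Alg := (true, false, false).
Definition ax    : Alg := (false, true, false).
Definition ay    : Alg := (false, false, true).
Definition cst (b : bool) : Alg := (b, false, false).

(* Omega^1: free left A-module on om1 = dx, om2 = dy.                       *)
(* (e1, e2) : Om1 stands for e1 om1 + e2 om2.                               *)
Definition Om1 := (Alg * Alg)%type.
Definition oadd (u v : Om1) : Om1 := (aadd u.1 v.1, aadd u.2 v.2).
Definition oscal (a : Alg) (u : Om1) : Om1 := (amul a u.1, amul a u.2).
Definition ozero : Om1 := (azero, azero).
Definition om1 : Om1 := (aone, azero).
Definition om2 : Om1 := (azero, aone).

(* right action on the generators, from
   om1 x = (1+x) om1, om1 y = x om2, om2 x = y om1, om2 y = (1+y) om2 *)
Definition rom1 (a : Alg) : Om1 :=
  let '(c0, c1, c2) := a in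
  (aadd (cst c0) (amul (cst c1) (aadd aone ax)), amul (cst c2) ax).
Definition rom2 (a : Alg) : Om1 :=
  let '(c0, c1, c2) := a in
  (amul (cst c1) ay, aadd (cst c0) (amul (cst c2) (aadd aone ay))).
Definition ormul (u : Om1) (a : Alg) : Om1 :=
  oadd (oscal u.1 (rom1 a)) (oscal u.2 (rom2 a)).

Definition dA (a : Alg) : Om1 := let '(_, c1, c2) := a in (cst c1, cst c2).

(* Omega^1 (x)_A Omega^1: free left module on om_i (x) om_j.                *)
(* (p1, p2) : T2 stands for p1 (x) om1 + p2 (x) om2  (p_j in Omega^1),      *)
(* i.e. the coefficient of om_i (x) om_j is the i-th component of p_j.      *)
Definition T2 := (Om1 * Om1)%type.
Definition t2add (s t : T2) : T2 := (oadd s.1 t.1, oadd s.2 t.2).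
Definition t2scal (a : Alg) (t : T2) : T2 := (oscal a t.1, oscal a t.2).
Definition t2zero : T2 := (ozero, ozero).
(* xi (x) (z1 om1 + z2 om2) = (xi z1) (x) om1 + (xi z2) (x) om2 *)
Definition tens (xi zeta : Om1) : T2 := (ormul xi zeta.1, ormul xi zeta.2).
Definition t2rmul (t : T2) (a : Alg) : T2 :=
  t2add (tens t.1 (rom1 a)) (tens t.2 (rom2 a)).

(* Omega^1 (x) Omega^1 (x) Omega^1: (t1, t2) stands for
   t1 (x) om1 + t2 (x) om2 with t_k in Omega^1 (x) Omega^1. *)
Definition T3 := (T2 * T2)%type.
Definition t3add (s t : T3) : T3 := (t2add s.1 t.1, t2add s.2 t.2).
Definition t3zero : T3 := (t2zero, t2zero).
Definition tens3 (xi : Om1) (t : T2) : T3 := (tens xi t.1, tens xi t.2).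
Definition sigma_id (s : T2 -> T2) (t : T3) : T3 := (s t.1, s t.2).

(* Omega^2 = A Vol (Vol central); a : Om2 stands for a Vol.                 *)
(* om1^om1 = (1+x)Vol, om1^om2 = om2^om1 = (x+y)Vol, om2^om2 = (1+y)Vol.    *)
Definition Om2 := Alg.
Definition w11 : Alg := aadd aone ax.
Definition w12 : Alg := aadd ax ay.
Definition w21 : Alg := aadd ax ay.
Definition w22 : Alg := aadd aone ay.
Definition wedge_om1 (xi : Om1) : Om2 := aadd (amul xi.1 w11) (amul xi.2 w21).
Definition wedge_om2 (xi : Om1) : Om2 := aadd (amul xi.1 w12) (amul xi.2 w22).
Definition wedge (t : T2) : Om2 := aadd (wedge_om1 t.1) (wedge_om2 t.2).
(* d : Omega^1 -> Omega^2, d(e1 om1 + e2 om2) = de1 ^ om1 + de2 ^ om2 (d om_i = 0) *)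
Definition dOm1 (u : Om1) : Om2 := wedge (dA u.1, dA u.2).

(* Omega^2 (x)_A Omega^1: (c1, c2) stands for (c1 Vol) (x) om1 + (c2 Vol) (x) om2
   = Vol (x) (c1 om1 + c2 om2)  (Vol central). *)
Definition Om2Om1 := Om1.
Definition Vol_tens (eta : Om1) : Om2Om1 := eta.
Definition wedgeT (xi : Om1) (t : T2) : Om2Om1 :=
  (wedge (tens xi t.1), wedge (tens xi t.2)).

Definition central (g : T2) : Prop := forall a : Alg, t2scal a g = t2rmul g a.
Definition quantum_symmetric (g : T2) : Prop := wedge g = azero.

Definition bimod_pairing (pr : T2 -> Alg) : Prop :=
  [/\ forall s t, pr (t2add s t) = aadd (pr s) (pr t),
      forall a t, pr (t2scal a t) = amul a (pr t)
    & forall t a, pr (t2rmul t a) = amul (pr t) a].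

(* ((eta, ) (x) id) g = eta = (id (x) ( , eta)) g, with g = g1 (x) om1 + g2 (x) om2 *)
Definition metric_inverse (g : T2) (pr : T2 -> Alg) : Prop :=
  [/\ bimod_pairing pr,
      forall eta : Om1, (pr (tens eta g.1), pr (tens eta g.2)) = eta
    & forall eta : Om1,
        oadd (ormul g.1 (pr (tens om1 eta))) (ormul g.2 (pr (tens om2 eta))) = eta].

Definition invertible_metric (g : T2) : Prop := exists pr, metric_inverse g pr.

Definition bimod_map (s : T2 -> T2) : Prop :=
  [/\ forall u v, s (t2add u v) = t2add (s u) (s v),
      forall a t, s (t2scal a t) = t2scal a (s t)
    & forall t a, s (t2rmul t a) = t2rmul (s t) a].

Definition left_connection (n : Om1 -> T2) : Prop :=
  (forall u v, n (oadd u v) = t2add (n u) (n v)) /\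
  (forall (a : Alg) (u : Om1), n (oscal a u) = t2add (t2scal a (n u)) (tens (dA a) u)).

Definition right_leibniz (n : Om1 -> T2) (s : T2 -> T2) : Prop :=
  forall (u : Om1) (a : Alg), n (ormul u a) = t2add (t2rmul (n u) a) (s (tens u (dA a))).

Definition torsion_free (n : Om1 -> T2) : Prop := forall u, wedge (n u) = dOm1 u.

(* (nabla (x) id) g + (sigma (x) id)(id (x) nabla) g = 0, evaluated on the
   representative g = g1 (x) om1 + g2 (x) om2 *)
Definition metric_compatible (g : T2) (n : Om1 -> T2) (s : T2 -> T2) : Prop :=
  t3add (n g.1, n g.2)
        (t3add (sigma_id s (tens3 g.1 (n om1))) (sigma_id s (tens3 g.2 (n om2))))
  = t3zero.

Definition QLC (g : T2) (n : Om1 -> T2) : Prop :=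
  left_connection n /\
  exists s : T2 -> T2,
    [/\ bimod_map s, right_leibniz n s, torsion_free n & metric_compatible g n s].

(* R_nabla = (d (x) id - id ^ nabla) nabla (in characteristic 2, - = +),
   evaluated on the representative nabla(eta) = p1 (x) om1 + p2 (x) om2 *)
Definition curvature (n : Om1 -> T2) (eta : Om1) : Om2Om1 :=
  let t := n eta in
  oadd (dOm1 t.1, dOm1 t.2) (oadd (wedgeT t.1 (n om1)) (wedgeT t.2 (n om2))).

Definition flat (n : Om1 -> T2) : Prop := forall eta, curvature n eta = ozero.

Definition laplacian (pr : T2 -> Alg) (n : Om1 -> T2) (a : Alg) : Alg := pr (n (dA a)).

Definition same_conn (n m : Om1 -> T2) : Prop := forall eta, n eta = m eta.

Definition gB : T2 :=
  ((aadd aone ay, aadd (aadd aone ax) ay),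
   (aadd (aadd aone ax) ay, aadd aone ax)).

From mathcomp Require Import all_boot.
From Stdlib Require Import Btauto.

Set Implicit Arguments.
Unset Strict Implicit.
Unset Printing Implicit Defensive.

(* Everything in sight is a finite-dimensional F_2-vector space, so each statement
   reduces to finitely many evaluations once the structures are cut down to finite
   data.  A bimodule pairing is determined by its values on the basis om_i (x) om_j, a
   left connection by nabla om1 and nabla om2, and since dx = om1 and dy = om2 the
   right Leibniz rule forces sigma(om_i (x) dx_j) = (nabla om_i) x_j - nabla(om_i x_j).
   Torsion freeness gives wedge (nabla om_i) = 0, leaving 512^2 candidates, and also
   wedge o sigma = wedge; applying wedge (x) id to metric compatibility then shows that
   the cotorsion, which is linear in nabla, vanishes.  This leaves 4096 candidates, of
   which metric compatibility keeps four. *)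

Ltac f2_coordinates :=
  intros; repeat match goal with
  | x : ?T |- _ => let T' := eval hnf in T in match T' with prod _ _ => destruct x end
  end;
  cbv -[xorb andb];
  repeat match goal with |- (_, _) = (_, _) => congr pair end;
  btauto.

Definition bools : seq bool := [:: false; true].
Definition alg_elems : seq Alg :=
  [seq (ab, c) | ab <- [seq (a, b) | a <- bools, b <- bools], c <- bools].
Definition om1_elems : seq Om1 := [seq (a, b) | a <- alg_elems, b <- alg_elems].
Definition t2_elems : seq T2 := [seq (u, v) | u <- om1_elems, v <- om1_elems].

Lemma mem_alg_elems (a : Alg) : a \in alg_elems.
Proof. by case: a => [[[] []] []]. Qed.

Lemma mem_om1_elems (u : Om1) : u \in om1_elems.
Proof. by case: u => a b; rewrite allpairs_f ?mem_alg_elems. Qed.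

Lemma mem_t2_elems (t : T2) : t \in t2_elems.
Proof. by case: t => u v; rewrite allpairs_f ?mem_om1_elems. Qed.

(* [all] with early exit, for evaluation by [vm_compute], under which [&&] is strict. *)
Fixpoint all_lazy (T : Type) (p : pred T) (s : seq T) : bool :=
  if s is x :: s' then (if p x then all_lazy p s' else false) else true.

Lemma all_lazyE (T : Type) (p : pred T) s : all_lazy p s = all p s.
Proof. by elim: s => //= x s ->; case: (p x). Qed.

Lemma forall_alg (P : pred Alg) : all_lazy P alg_elems -> forall a, P a.
Proof. by rewrite all_lazyE => /allP P_all a; exact: P_all (mem_alg_elems a). Qed.

Lemma forall_om1 (P : pred Om1) : all_lazy P om1_elems -> forall u, P u.
Proof. by rewrite all_lazyE => /allP P_all u; exact: P_all (mem_om1_elems u). Qed.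

Definition E11 : T2 := tens om1 om1.
Definition E12 : T2 := tens om1 om2.
Definition E21 : T2 := tens om2 om1.
Definition E22 : T2 := tens om2 om2.

Lemma om1_expand (u : Om1) : u = oadd (oscal u.1 om1) (oscal u.2 om2).
Proof. f2_coordinates. Qed.

Lemma t2_expand (t : T2) :
  t = t2add (t2add (t2scal t.1.1 E11) (t2scal t.2.1 E12))
            (t2add (t2scal t.1.2 E21) (t2scal t.2.2 E22)).
Proof. f2_coordinates. Qed.

Definition t2_basis : seq T2 := [:: E11; E12; E21; E22].

Lemma aaddK (a b : Alg) : aadd a (aadd a b) = b.
Proof. f2_coordinates. Qed.

Lemma t2addK (s t : T2) : t2add s (t2add s t) = t.
Proof. f2_coordinates. Qed.

Lemma amulDl (a b c : Alg) : amul (aadd a b) c = aadd (amul a c) (amul b c).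
Proof. f2_coordinates. Qed.

Lemma amulA (a b c : Alg) : amul a (amul b c) = amul (amul a b) c.
Proof. f2_coordinates. Qed.

Lemma t2rmulDl (s t : T2) a : t2rmul (t2add s t) a = t2add (t2rmul s a) (t2rmul t a).
Proof. f2_coordinates. Qed.

Lemma t2rmulZl b (t : T2) a : t2rmul (t2scal b t) a = t2scal b (t2rmul t a).
Proof. f2_coordinates. Qed.

Lemma wedgeD (s t : T2) : wedge (t2add s t) = aadd (wedge s) (wedge t).
Proof. f2_coordinates. Qed.

Lemma wedgeZ a (t : T2) : wedge (t2scal a t) = amul a (wedge t).
Proof. f2_coordinates. Qed.

Lemma wedge_rmul (t : T2) a : wedge (t2rmul t a) = amul (wedge t) a.
Proof. f2_coordinates. Qed.

Lemma dOm1_rmul (u : Om1) a :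
  dOm1 (ormul u a) = aadd (amul (dOm1 u) a) (wedge (tens u (dA a))).
Proof. f2_coordinates. Qed.

Lemma rlinear_from_basis (f : T2 -> T2) :
  (forall s t, f (t2add s t) = t2add (f s) (f t)) ->
  (forall b t, f (t2scal b t) = t2scal b (f t)) ->
  all (fun E => all_lazy (fun a => f (t2rmul E a) == t2rmul (f E) a) alg_elems) t2_basis ->
  forall t a, f (t2rmul t a) = t2rmul (f t) a.
Proof.
move=> fD fZ /and5P [/forall_alg f11 /forall_alg f12 /forall_alg f21 /forall_alg f22 _] t a.
rewrite (t2_expand t) !t2rmulDl !t2rmulZl !fD !fZ.
by rewrite (eqP (f11 a)) (eqP (f12 a)) (eqP (f21 a)) (eqP (f22 a)) !t2rmulDl !t2rmulZl.
Qed.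

Lemma rlinear_form_from_basis (f : T2 -> Alg) :
  (forall s t, f (t2add s t) = aadd (f s) (f t)) ->
  (forall b t, f (t2scal b t) = amul b (f t)) ->
  all (fun E => all_lazy (fun a => f (t2rmul E a) == amul (f E) a) alg_elems) t2_basis ->
  forall t a, f (t2rmul t a) = amul (f t) a.
Proof.
move=> fD fZ /and5P [/forall_alg f11 /forall_alg f12 /forall_alg f21 /forall_alg f22 _] t a.
rewrite (t2_expand t) !t2rmulDl !t2rmulZl !fD !fZ.
by rewrite (eqP (f11 a)) (eqP (f12 a)) (eqP (f21 a)) (eqP (f22 a)) !amulDl !amulA.
Qed.

(* The values of a pairing on E11, E12, E21, E22, in this order. *)
Definition Gram := (Alg * Alg * Alg * Alg)%type.

Definition gram_elems : seq Gram :=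
  [seq (pqr, w) | pqr <- [seq (pq, r) | pq <- om1_elems, r <- alg_elems], w <- alg_elems].

Lemma mem_gram_elems (P : Gram) : P \in gram_elems.
Proof. by case: P => [[[p q] r] w]; rewrite !allpairs_f ?mem_om1_elems ?mem_alg_elems. Qed.

Definition pairing_of (P : Gram) (t : T2) : Alg :=
  let '(p11, p12, p21, p22) := P in
  aadd (aadd (amul t.1.1 p11) (amul t.2.1 p12)) (aadd (amul t.1.2 p21) (amul t.2.2 p22)).

Definition gram (pr : T2 -> Alg) : Gram := (pr E11, pr E12, pr E21, pr E22).

Lemma bimod_pairingE pr : bimod_pairing pr -> pr =1 pairing_of (gram pr).
Proof. by case=> pr_add pr_scal _ t; rewrite {1}(t2_expand t) !pr_add !pr_scal. Qed.

Lemma pairing_ofD P s t :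
  pairing_of P (t2add s t) = aadd (pairing_of P s) (pairing_of P t).
Proof. f2_coordinates. Qed.

Lemma pairing_ofZ P a t : pairing_of P (t2scal a t) = amul a (pairing_of P t).
Proof. f2_coordinates. Qed.

Definition pairing_rmulb (P : Gram) : bool :=
  all (fun E => all_lazy (fun a =>
    pairing_of P (t2rmul E a) == amul (pairing_of P E) a) alg_elems) t2_basis.

Definition metric_inverseb (g : T2) (P : Gram) : bool :=
  all_lazy (fun eta => (pairing_of P (tens eta g.1), pairing_of P (tens eta g.2)) == eta)
      om1_elems &&
  all_lazy (fun eta => oadd (ormul g.1 (pairing_of P (tens om1 eta)))
                       (ormul g.2 (pairing_of P (tens om2 eta))) == eta) om1_elems.

Lemma metric_inverse_gram g pr : metric_inverse g pr -> metric_inverseb g (gram pr).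
Proof.
case=> pr_bimod pr_left pr_right; have prE := bimod_pairingE pr_bimod.
by rewrite /metric_inverseb !all_lazyE; apply/andP; split; apply/allP => eta _;
  rewrite -!prE ?pr_left ?pr_right.
Qed.

Lemma metric_inverse_pairing_of g P :
  metric_inverseb g P -> pairing_rmulb P -> metric_inverse g (pairing_of P).
Proof.
case/andP=> /forall_om1 P_left /forall_om1 P_right P_rmul.
split; [split | move=> eta; exact/eqP/P_left | move=> eta; exact/eqP/P_right].
- exact: pairing_ofD.
- exact: pairing_ofZ.
- exact: rlinear_form_from_basis (pairing_ofD P) (pairing_ofZ P) P_rmul.
Qed.

Definition centralb (g : T2) : bool :=
  all_lazy (fun a => t2scal a g == t2rmul g a) alg_elems.

Lemma centralP g : reflect (central g) (centralb g).
Proof.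
rewrite /centralb all_lazyE; apply: (iffP allP) => [g_central a | g_central a _]; apply/eqP => //.
exact: g_central (mem_alg_elems a).
Qed.

Definition gramB : Gram := ((true, true, false), (false, true, true), (false, true, true),
                            (true, false, true)).

Lemma gramB_inverse : metric_inverseb gB gramB && pairing_rmulb gramB.
Proof. by vm_compute. Qed.

Lemma gB_inverse_unique : all_lazy (fun P => metric_inverseb gB P ==> (P == gramB)) gram_elems.
Proof. by vm_compute. Qed.

Definition central_symmetric_t2 : seq T2 :=
  [seq g <- t2_elems | (wedge g == azero) && centralb g].

Lemma central_symmetric_invertible_gB :
  all_lazy (fun g => has (metric_inverseb g) gram_elems ==> (g == gB)) central_symmetric_t2.
Proof. by vm_compute. Qed.

Lemma gB_unique_metric g :
  invertible_metric g /\ central g /\ quantum_symmetric g <-> g = gB.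
Proof.
split=> [[[pr pr_inverse] [g_central g_symmetric]] | ->].
  have g_cs : g \in central_symmetric_t2.
    by rewrite mem_filter mem_t2_elems andbT g_symmetric eqxx; exact/centralP.
  apply/eqP; move: central_symmetric_invertible_gB.
  rewrite all_lazyE => /allP/(_ g g_cs)/implyP; apply.
  by apply/hasP; exists (gram pr); [exact: mem_gram_elems | exact: metric_inverse_gram].
split; last by split; [apply/centralP | ]; vm_compute.
by exists (pairing_of gramB); case/andP: gramB_inverse; exact: metric_inverse_pairing_of.
Qed.

Lemma gB_inverse_pairing pr : metric_inverse gB pr -> pr =1 pairing_of gramB.
Proof.
move=> pr_inverse; have [pr_bimod _ _] := pr_inverse.
move: gB_inverse_unique; rewrite all_lazyE => /allP/(_ _ (mem_gram_elems (gram pr))).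
move=> /implyP/(_ (metric_inverse_gram pr_inverse))/eqP <-.
exact: bimod_pairingE.
Qed.

(* The values of a left connection on om1 and om2. *)
Definition Conn := (T2 * T2)%type.

Definition conn_of (N : Conn) (u : Om1) : T2 :=
  t2add (t2add (t2scal u.1 N.1) (tens (dA u.1) om1))
        (t2add (t2scal u.2 N.2) (tens (dA u.2) om2)).

Lemma left_connectionE n : left_connection n -> n =1 conn_of (n om1, n om2).
Proof. by case=> n_add n_scal u; rewrite {1}(om1_expand u) n_add !n_scal. Qed.

Lemma left_connection_conn_of N : left_connection (conn_of N).
Proof. split; f2_coordinates. Qed.

Lemma conn_of_om1 N : conn_of N om1 = N.1.
Proof. f2_coordinates. Qed.

Lemma conn_of_om2 N : conn_of N om2 = N.2.
Proof. f2_coordinates. Qed.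

Lemma conn_of_inj N M : same_conn (conn_of N) (conn_of M) -> N = M.
Proof.
move=> NM; have := NM om2; have := NM om1; rewrite !conn_of_om1 !conn_of_om2.
by case: N M {NM} => [N1 N2] [M1 M2] /= -> ->.
Qed.

Lemma wedge_conn_of N u :
  wedge (conn_of N u) = aadd (aadd (amul u.1 (wedge N.1)) (amul u.2 (wedge N.2))) (dOm1 u).
Proof. f2_coordinates. Qed.

Lemma torsion_free_conn_of N :
  wedge N.1 = azero -> wedge N.2 = azero -> torsion_free (conn_of N).
Proof. by move=> wedge1 wedge2 u; rewrite wedge_conn_of wedge1 wedge2; f2_coordinates. Qed.

Definition t2lin (S11 S12 S21 S22 : T2) (t : T2) : T2 :=
  t2add (t2add (t2scal t.1.1 S11) (t2scal t.2.1 S12))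
        (t2add (t2scal t.1.2 S21) (t2scal t.2.2 S22)).

Lemma bimod_mapE s : bimod_map s -> s =1 t2lin (s E11) (s E12) (s E21) (s E22).
Proof. by case=> s_add s_scal _ t; rewrite {1}(t2_expand t) !s_add !s_scal. Qed.

Lemma t2linD S11 S12 S21 S22 s t :
  t2lin S11 S12 S21 S22 (t2add s t) =
  t2add (t2lin S11 S12 S21 S22 s) (t2lin S11 S12 S21 S22 t).
Proof. f2_coordinates. Qed.

Lemma t2linZ S11 S12 S21 S22 a t :
  t2lin S11 S12 S21 S22 (t2scal a t) = t2scal a (t2lin S11 S12 S21 S22 t).
Proof. f2_coordinates. Qed.

(* The right Leibniz rule at om_i (x) dx_j, with dx = om1 and dy = om2, solved for sigma
   (in characteristic 2 minus is plus). *)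
Definition sigma_of (N : Conn) : T2 -> T2 :=
  let sigma_gen Nu u a := t2add (t2rmul Nu a) (conn_of N (ormul u a)) in
  t2lin (sigma_gen N.1 om1 ax) (sigma_gen N.1 om1 ay)
        (sigma_gen N.2 om2 ax) (sigma_gen N.2 om2 ay).

Lemma sigma_forced n s :
  left_connection n -> bimod_map s -> right_leibniz n s -> s =1 sigma_of (n om1, n om2).
Proof.
move=> n_conn s_bimod n_leibniz t.
have sE u a :
    s (tens u (dA a)) = t2add (t2rmul (n u) a) (conn_of (n om1, n om2) (ormul u a)).
  by rewrite -(left_connectionE n_conn) n_leibniz t2addK.
by rewrite (bimod_mapE s_bimod t) /sigma_of /= -!sE.
Qed.

(* Torsion freeness makes wedge (id + sigma) vanish on om (x) da, which spans T2. *)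
Lemma wedge_sigma n s :
  left_connection n -> bimod_map s -> right_leibniz n s -> torsion_free n ->
  forall t, wedge (s t) = wedge t.
Proof.
move=> n_conn s_bimod n_leibniz n_torsion.
have sE u a : wedge (s (tens u (dA a))) = wedge (tens u (dA a)).
  have := congr1 wedge (n_leibniz u a).
  rewrite wedgeD wedge_rmul !n_torsion dOm1_rmul.
  by move/(congr1 (aadd (amul (dOm1 u) a))); rewrite !aaddK.
move=> t; rewrite (bimod_mapE s_bimod t) {2}(t2_expand t) /t2lin !wedgeD !wedgeZ.
by rewrite (sE om1 ax) (sE om1 ay) (sE om2 ax) (sE om2 ay).
Qed.

Definition metric_defect (g : T2) (n : Om1 -> T2) (s : T2 -> T2) : T3 :=
  t3add (n g.1, n g.2)
        (t3add (sigma_id s (tens3 g.1 (n om1))) (sigma_id s (tens3 g.2 (n om2)))).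

Lemma metric_defect_ext g n n' s s' :
  n =1 n' -> s =1 s' -> metric_defect g n s = metric_defect g n' s'.
Proof. by move=> nE sE; rewrite /metric_defect /sigma_id !nE !sE. Qed.

Definition wedge3 (t : T3) : Om2Om1 := (wedge t.1, wedge t.2).

Lemma wedge3D s t : wedge3 (t3add s t) = oadd (wedge3 s) (wedge3 t).
Proof. by rewrite /wedge3 /= !wedgeD. Qed.

(* The cotorsion (d (x) id - id ^ nabla) g, for nabla om_i = N_i. *)
Definition cotorsion (g : T2) (N : Conn) : Om2Om1 :=
  oadd (dOm1 g.1, dOm1 g.2) (oadd (wedgeT g.1 N.1) (wedgeT g.2 N.2)).

Lemma wedge3_metric_defect g n s :
  left_connection n -> bimod_map s -> right_leibniz n s -> torsion_free n ->
  wedge3 (metric_defect g n s) = cotorsion g (n om1, n om2).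
Proof.
move=> n_conn s_bimod n_leibniz n_torsion.
have sW := wedge_sigma n_conn s_bimod n_leibniz n_torsion.
by rewrite /metric_defect !wedge3D /wedge3 /= !sW !n_torsion.
Qed.

Lemma QLC_cotorsion g n : QLC g n -> cotorsion g (n om1, n om2) = ozero.
Proof.
case=> n_conn [s [s_bimod n_leibniz n_torsion n_metric]].
rewrite -(wedge3_metric_defect g n_conn s_bimod n_leibniz n_torsion).
by have -> : metric_defect g n s = t3zero := n_metric.
Qed.

Definition qlc_conditions (N : Conn) : bool :=
  [&& wedge N.1 == azero, wedge N.2 == azero
    & metric_defect gB (conn_of N) (sigma_of N) == t3zero].

Lemma QLC_conditions n : QLC gB n -> qlc_conditions (n om1, n om2).
Proof.
case=> n_conn [s [s_bimod n_leibniz n_torsion n_metric]].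
apply/and3P; split; [by rewrite n_torsion | by rewrite n_torsion | ].
have n_defect : metric_defect gB n s = t3zero := n_metric.
by rewrite -(metric_defect_ext _ (left_connectionE n_conn)
                               (sigma_forced n_conn s_bimod n_leibniz)) n_defect.
Qed.

Definition qlc_certificate (N : Conn) : bool :=
  [&& qlc_conditions N,
      all (fun E => all_lazy (fun a =>
        sigma_of N (t2rmul E a) == t2rmul (sigma_of N E) a) alg_elems) t2_basis
    & all_lazy (fun u => all_lazy (fun a =>
        conn_of N (ormul u a) == t2add (t2rmul (conn_of N u) a) (sigma_of N (tens u (dA a))))
        alg_elems) om1_elems].

Lemma qlc_certificateP N : qlc_certificate N -> QLC gB (conn_of N).
Proof.
case/and3P=> /and3P [/eqP wedge1 /eqP wedge2 /eqP N_metric] s_rmul N_leibniz.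
split; first exact: left_connection_conn_of.
exists (sigma_of N); split=> //.
- split; [exact: t2linD | exact: t2linZ | ].
  exact: rlinear_from_basis (t2linD _ _ _ _) (t2linZ _ _ _ _) s_rmul.
- by move=> u a; apply/eqP; exact: forall_alg (forall_om1 N_leibniz u) a.
- exact: torsion_free_conn_of.
Qed.

Definition nabla1 : Conn :=
  (((true, true, false), (false, true, true)), ((true, false, true), (true, true, false)),
   (((true, false, true), (true, true, false)), ((false, true, true), (true, false, true)))).
Definition nabla2 : Conn :=
  (((true, true, false), (true, false, false)), ((true, true, true), (true, false, false)),
   (((true, false, false), (true, true, false)), ((false, false, false), (true, true, true)))).
Definition nabla3 : Conn :=
  (((true, true, true), (false, false, false)), ((true, false, true), (true, false, false)),
   (((true, false, false), (true, true, true)), ((true, false, false), (true, false, true)))).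
Definition nabla4 : Conn :=
  (((true, true, true), (true, true, true)), ((true, true, true), (true, true, false)),
   (((true, false, true), (true, true, true)), ((true, true, true), (true, true, true)))).

Definition qlc_solutions : seq Conn := [:: nabla1; nabla2; nabla3; nabla4].

Lemma qlc_solutions_certified : all qlc_certificate qlc_solutions.
Proof. by vm_compute. Qed.

Definition wedge_kernel : seq T2 := [seq t <- t2_elems | wedge t == azero].

Lemma qlc_conditions_classification :
  let tf := wedge_kernel in
  all (fun N1 => all (fun N2 => qlc_conditions (N1, N2) ==> ((N1, N2) \in qlc_solutions))
                     [seq N2 <- tf | cotorsion gB (N1, N2) == ozero]) tf.
Proof. by vm_compute. Qed.

Lemma QLC_gB_classification n :
  QLC gB n -> exists2 N, N \in qlc_solutions & same_conn n (conn_of N).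
Proof.
move=> n_qlc; have n_conditions := QLC_conditions n_qlc.
have /and3P [/eqP wedge1 /eqP wedge2 _] := n_conditions.
have in_kernel t : wedge t = azero -> t \in wedge_kernel.
  by move=> wedge_t; rewrite mem_filter wedge_t eqxx mem_t2_elems.
exists (n om1, n om2); last by case: n_qlc => n_conn _; exact: left_connectionE.
have N2_in : n om2 \in [seq N2 <- wedge_kernel | cotorsion gB (n om1, N2) == ozero].
  by rewrite mem_filter (QLC_cotorsion n_qlc) eqxx in_kernel.
move/allP/(_ _ (in_kernel _ wedge1)): qlc_conditions_classification.
by move/allP/(_ _ N2_in)/implyP; apply.
Qed.

Lemma eval_curvature_conn_of N (R : Om1 -> Om2Om1) :
  all_lazy (fun eta => curvature (conn_of N) eta == R eta) om1_elems ->
  forall eta, curvature (conn_of N) eta = R eta.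
Proof. by move=> /forall_om1 curvN eta; apply/eqP. Qed.

Lemma quantum_dimension_gB pr : metric_inverse gB pr -> pr gB = azero.
Proof. by move/gB_inverse_pairing ->; vm_compute. Qed.

Lemma laplacian_qlc_solutions pr N a :
  metric_inverse gB pr -> N \in qlc_solutions -> laplacian pr (conn_of N) a = azero.
Proof.
move=> /gB_inverse_pairing prE N_sol; rewrite /laplacian prE; apply/eqP; move: a.
apply: forall_alg; move: N N_sol; apply/allP.
by vm_compute.
Qed.

Theorem mainTheorem7 :
  (forall g : T2,
     (invertible_metric g /\ central g /\ quantum_symmetric g) <-> g = gB) /\
  exists n1 n2 n3 n4 : Om1 -> T2,
    [/\ QLC gB n1 /\ QLC gB n2 /\ QLC gB n3 /\ QLC gB n4,
        ~ same_conn n1 n2 /\ ~ same_conn n1 n3 /\ ~ same_conn n1 n4 /\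
        ~ same_conn n2 n3 /\ ~ same_conn n2 n4 /\ ~ same_conn n3 n4,
        (forall n, QLC gB n ->
           same_conn n n1 \/ same_conn n n2 \/ same_conn n n3 \/ same_conn n n4),
        flat n1 /\ flat n2 /\ flat n3 /\
          (forall eta : Om1, curvature n4 eta = Vol_tens eta)
      & forall pr : T2 -> Alg, metric_inverse gB pr ->
          pr gB = azero /\
          (forall a : Alg,
             [/\ laplacian pr n1 a = azero, laplacian pr n2 a = azero,
                 laplacian pr n3 a = azero & laplacian pr n4 a = azero])].
Proof.
split; first exact: gB_unique_metric.
have sol_QLC N : N \in qlc_solutions -> QLC gB (conn_of N).
  by move/(allP qlc_solutions_certified)/qlc_certificateP.
exists (conn_of nabla1), (conn_of nabla2), (conn_of nabla3), (conn_of nabla4); split.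
- by split; [|split; [|split]]; apply: sol_QLC; rewrite !inE eqxx ?orbT.
- by do !split; move/conn_of_inj.
- move=> n /QLC_gB_classification [N]; rewrite !inE => /or4P [] /eqP -> nE.
  + by left.
  + by right; left.
  + by do 2!right; left.
  + by do 3!right.
- by do !split; apply: eval_curvature_conn_of; vm_compute.
- move=> pr pr_inverse; split; first exact: quantum_dimension_gB.
  by move=> a; split; apply: laplacian_qlc_solutions; rewrite ?inE ?eqxx ?orbT.
Qed.
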